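(* Let $\sigma,\mu\in S_n$. Then: (i) $\mathrm{Seg}(\sigma)$ is a partition of $\{1,\dots,n\}$. (ii) The intersection of any two $\sigma$-sections is either a $\sigma$-section or empty. (iii) The $\sigma$-sections are exactly the nonempty intervals of $\{1<\dots<n\}$ that are unions of $\sigma$-segments. (iv) $(\sigma,\mu)\in\rho_{ie}$ if and only if there are pairwise disjoint $\sigma$-sections $J_1,\dots,J_t$ with $J_1\cup\dots\cup J_t=\{1,\dots,n\}$ such that $\mu|_{J_i}\in\{\sigma|_{J_i},(\sigma|_{J_i})^{-1}\}$ for $i=1,\dots,t$. (v) $\rho_{ie}$ is an equivalence relation on $S_n$.
   Context: $S_n$ is the set of permutations of $\{1,\dots,n\}$ with the order $1<\dots<n$. For $\sigma\in S_n$, a subset $I$ is closed if $\sigma(i)\in I$ for all $i\in I$ ($\emptyset$ is closed). A nonempty interval $I=\{u,\dots,v\}$ is a $\sigma$-section if $\{1,\dots,u-1\}$, $I$ and $\{v+1,\dots,n\}$ are closed. Inclusion-minimal $\sigma$-sections are $\sigma$-segments; $\mathrm{Seg}(\sigma)$ is the set of them. $(\sigma,\mu)\in\rho_{ie}$ iff $\mathrm{Seg}(\sigma)=\mathrm{Seg}(\mu)$ and for all $I\in\mathrm{Seg}(\sigma)$, $\mu|_I\in\{\sigma|_I,(\sigma|_I)^{-1}\}$ (restrictions). *)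

(* Elements 1..n of the paper are represented by 'I_n = {0,..,n-1}
   with its usual order; S_n is 'S_n. *)
From mathcomp Require Import all_boot all_fingroup.
Set Implicit Arguments. Unset Strict Implicit. Unset Printing Implicit Defensive.

Section Sections.
Variable n : nat.
Implicit Types (s m : 'S_n) (I J : {set 'I_n}).

Definition closed s I : bool := [forall i in I, s i \in I].

Definition ival (u v : 'I_n) : {set 'I_n} := [set i : 'I_n | u <= i <= v].

Definition is_interval I : bool :=
  [exists u : 'I_n, exists v : 'I_n, (u <= v) && (I == ival u v)].

Definition section s I : bool :=
  [exists u : 'I_n, exists v : 'I_n,
     [&& u <= v, I == ival u v,
         closed s [set i : 'I_n | i < u], closed s I
       & closed s [set i : 'I_n | v < i]]].

Definition segment s I : bool :=
  section s I && [forall J : {set 'I_n}, (section s J && (J \subset I)) ==> (J == I)].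

Definition Seg s : {set {set 'I_n}} := [set I | segment s I].

(* m|_I \in {s|_I, (s|_I)^-1}, for an s-closed I *)
Definition restr_rel s m I : bool :=
  [forall i in I, m i == s i] || [forall i in I, m i == (s^-1)%g i].

Definition rho_ie s m : bool :=
  (Seg s == Seg m) && [forall I in Seg s, restr_rel s m I].

End Sections.

(* Call k a cut of s when {i | i < k} is s-closed.  The s-sections are exactly the
   intervals [a, b) between two cuts a < b, and the s-segments are those between
   consecutive cuts, which gives (i)-(iii).  For (iv), closedness of a set can be tested
   on each block of a cover by closed sets, and inside a block where m agrees with s or
   with s^-1 a subset is m-closed iff it is s-closed.  So s and m have the same cuts,
   hence the same segments, and each segment lies inside one block. *)

From Pilot Require Import Defs.
From mathcomp Require Import all_boot all_fingroup zify.
(* Re-import so that [closed] is [Defs.closed] rather than [fingraph.closed]. *)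
Import Defs.
Set Implicit Arguments. Unset Strict Implicit. Unset Printing Implicit Defensive.

Section Closed.
Variable n : nat.
Implicit Types (s m : 'S_n) (A B : {set 'I_n}).

Lemma closedP s A : reflect (forall i, (s i \in A) = (i \in A)) (closed s A).
Proof.
apply: (iffP forall_inP) => [sA i|sA i iA]; last by rewrite sA.
have sAA : s @: A \subset A by apply/subsetP => _ /imsetP[j /sA jA ->].
have imA : s @: A = A.
  by apply/eqP; rewrite eqEcard sAA (card_imset _ perm_inj) leqnn.
by rewrite -{1}imA (mem_imset _ _ perm_inj).
Qed.

Lemma closed0 s : closed s set0.
Proof. by apply/closedP => i; rewrite !inE. Qed.

Lemma closedT s : closed s setT.
Proof. by apply/closedP => i; rewrite !inE. Qed.

Lemma closedC s A : closed s A -> closed s (~: A).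
Proof. by move/closedP=> sA; apply/closedP => i; rewrite !inE sA. Qed.

Lemma closedI s A B : closed s A -> closed s B -> closed s (A :&: B).
Proof. by move=> /closedP sA /closedP sB; apply/closedP => i; rewrite !inE sA sB. Qed.

Lemma closedD s A B : closed s A -> closed s B -> closed s (A :\: B).
Proof. by move=> sA sB; rewrite setDE closedI ?closedC. Qed.

Lemma closedV s A : closed (s^-1)%g A = closed s A.
Proof.
suff closed_inv t B : closed t B -> closed (t^-1)%g B.
  by apply/idP/idP => /closed_inv //; rewrite invgK.
by move/closedP=> tB; apply/closedP => i; rewrite -tB permKV.
Qed.

Lemma eq_closed s m A : {in A, s =1 m} -> closed s A = closed m A.
Proof. by move=> sm; apply: eq_forallb_in => i iA; rewrite sm. Qed.

Lemma closed_cover s (P : {set {set 'I_n}}) A :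
  cover P = setT -> {in P, forall J, closed s J} ->
  closed s A = [forall J in P, closed s (J :&: A)].
Proof.
move=> covP sP; apply/idP/forall_inP => [sA J JP|sPA]; first exact: closedI (sP J JP) sA.
apply/closedP => i; have /bigcupP[J JP iJ] : i \in cover P by rewrite covP inE.
have sJi : s i \in J by rewrite (closedP _ _ (sP J JP)).
by have /closedP/(_ i) := sPA J JP; rewrite !inE iJ sJi.
Qed.

End Closed.

Section Cuts.
Variable n : nat.
Implicit Types (s m : 'S_n) (I J : {set 'I_n}).

Definition below k : {set 'I_n} := [set i : 'I_n | i < k].
Definition itv a b : {set 'I_n} := [set i : 'I_n | a <= i < b].
Definition cut s k := closed s (below k).

Lemma itv_below a b : itv a b = below b :\: below a.
Proof. by apply/setP => i; rewrite !inE -leqNgt. Qed.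

Lemma ival_itv (u v : 'I_n) : ival u v = itv u v.+1.
Proof. by apply/setP => i; rewrite !inE. Qed.

Lemma itvI a b c d : itv a b :&: itv c d = itv (maxn a c) (minn b d).
Proof. by apply/setP => i; rewrite !inE; lia. Qed.

Lemma itv0 a b : b <= a -> itv a b = set0.
Proof. by move=> ba; apply/setP => i; rewrite !inE; lia. Qed.

Lemma itv_neq0 a b : a < b <= n -> itv a b != set0.
Proof.
move=> ab; have an : a < n by lia.
by apply/set0Pn; exists (Ordinal an); rewrite inE /=; lia.
Qed.

Lemma itv_subset a b c d : c < d <= n -> itv c d \subset itv a b -> a <= c /\ d <= b.
Proof.
move=> cd /subsetP cdab.
have mem k : c <= k < d -> a <= k < b.
  move=> kcd; have kn : k < n by lia.
  by have := cdab (Ordinal kn); rewrite !inE /=; apply.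
by have := mem c; have := mem d.-1; lia.
Qed.

Lemma cut0 s : cut s 0.
Proof. by rewrite /cut (_ : below 0 = set0) ?closed0 //; apply/setP => i; rewrite !inE. Qed.

Lemma cutT s k : n <= k -> cut s k.
Proof.
move=> nk; rewrite /cut (_ : below k = setT) ?closedT //.
by apply/setP => i; rewrite !inE; have := ltn_ord i; lia.
Qed.

Lemma closed_itv s a b : cut s a -> cut s b -> closed s (itv a b).
Proof. by move=> ca cb; rewrite itv_below closedD. Qed.

Lemma is_intervalP I : reflect (exists a b, a < b <= n /\ I = itv a b) (is_interval I).
Proof.
apply: (iffP existsP) => [[u /existsP[v /andP[uv /eqP ->]]]|[a [b [ab ->]]]].
  by exists u, v.+1; rewrite ival_itv; split=> //; have := ltn_ord v; lia.
have [an bn] : a < n /\ b.-1 < n by lia.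
exists (Ordinal an); apply/existsP; exists (Ordinal bn).
by rewrite ival_itv /= prednK ?eqxx; lia.
Qed.

Lemma sectionP s I :
  reflect (exists a b, [/\ a < b <= n, cut s a, cut s b & I = itv a b]) (section s I).
Proof.
have above_below (v : 'I_n) : [set i : 'I_n | v < i] = ~: below v.+1.
  by apply/setP => i; rewrite !inE ltnS leqNgt.
apply: (iffP existsP) => [[u /existsP[v /and5P[uv /eqP -> su _ sv]]]|].
  exists u, v.+1; split=> //; first by have := ltn_ord v; lia.
  by have := closedC sv; rewrite above_below setCK.
move=> [a [b [ab sa sb ->]]]; have [an bn] : a < n /\ b.-1 < n by lia.
exists (Ordinal an); apply/existsP; exists (Ordinal bn).
rewrite ival_itv above_below /= prednK; last lia.
rewrite eqxx closed_itv // closedC //= andbT.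
by apply/andP; split; [lia | exact: sa].
Qed.

Lemma segmentP s I :
  reflect (exists a b, [/\ a < b <= n, cut s a, cut s b, I = itv a b
                          & forall c, a < c < b -> ~~ cut s c]) (segment s I).
Proof.
apply: (iffP andP) => [[/sectionP[a [b [ab sa sb ->]]] /forallP minI]|].
  exists a, b; split=> // c acb; apply/negP => sc.
  have sec_ac : section s (itv a c) by apply/sectionP; exists a, c; split=> //; lia.
  have sub_ac : itv a c \subset itv a b by apply/subsetP => i; rewrite !inE; lia.
  have /eqP eq_ac := implyP (minI (itv a c)) (introT andP (conj sec_ac sub_ac)).
  have /(itv_subset ab)[] : itv a b \subset itv a c by rewrite eq_ac.
  lia.
move=> [a [b [ab sa sb -> no_cut]]]; split; first by apply/sectionP; exists a, b.
apply/forallP => J; apply/implyP => /andP[/sectionP[c [d [cd sc sd ->]]] sub_cd].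
have [ac db] := itv_subset cd sub_cd.
have -> : c = a by apply/eqP; apply: contraTT sc => ca; apply: no_cut; lia.
have -> : d = b by apply/eqP; apply: contraTT sd => db'; apply: no_cut; lia.
by [].
Qed.

Lemma segment_section s I : segment s I -> section s I.
Proof. by case/andP. Qed.

Lemma section_neq0 s I : section s I -> I != set0.
Proof. by case/sectionP => a [b [ab _ _ ->]]; exact: itv_neq0. Qed.

Lemma section_closed s I : section s I -> closed s I.
Proof. by case/sectionP => a [b [_ sa sb ->]]; exact: closed_itv. Qed.

Lemma section_meet s I J : section s I -> section s J ->
  section s (I :&: J) \/ I :&: J = set0.
Proof.
move=> /sectionP[a [b [ab sa sb ->]]] /sectionP[c [d [cd sc sd ->]]].
rewrite itvI; case: (ltnP (maxn a c) (minn b d)) => [nonempty|]; last by right; exact: itv0.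
left; apply/sectionP; exists (maxn a c), (minn b d); split=> //; first by lia.
  by rewrite /maxn; case: ltnP.
by rewrite /minn; case: ltnP.
Qed.

Lemma segment_cover s (i : 'I_n) : exists2 T, segment s T & i \in T.
Proof.
have cut_le : exists k, (k <= i) && cut s k by exists 0; rewrite cut0 andbT.
have cut_gt : exists k, (i < k) && cut s k by exists n; rewrite cutT // andbT.
have cut_le_bound k : (k <= i) && cut s k -> k <= i by case/andP.
have [a /andP[ai sa] max_a] := ex_maxnP cut_le cut_le_bound.
have [b /andP[ib sb] min_b] := ex_minnP cut_gt.
have bn : b <= n by have := min_b n; rewrite ltn_ord cutT //; apply.
exists (itv a b); last by rewrite inE ai ib.
apply/segmentP; exists a, b; split=> //; first by lia.
move=> c ac_b; apply/negP => sc; case: (leqP c i) => ci.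
  by have := max_a c; rewrite ci sc => /(_ isT); lia.
by have := min_b c; rewrite ci sc => /(_ isT); lia.
Qed.

Lemma segment_sub_section s T I :
  segment s T -> section s I -> T :&: I != set0 -> T \subset I.
Proof.
case/andP=> secT /forallP minT secI meet_TI.
case: (section_meet secT secI) => [secTI|TI0]; last by rewrite TI0 eqxx in meet_TI.
have /eqP <- := implyP (minT (T :&: I)) (introT andP (conj secTI (subsetIl T I))).
exact: subsetIr.
Qed.

Lemma segment_eq s T1 T2 : segment s T1 -> segment s T2 -> T1 :&: T2 != set0 -> T1 = T2.
Proof.
move=> sT1 sT2 meet12; apply/eqP; rewrite eqEsubset.
by rewrite (segment_sub_section sT1) ?(segment_sub_section sT2) ?segment_section // setIC.
Qed.

Lemma partition_Seg s : partition (Seg s) [set: 'I_n].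
Proof.
apply/and3P; split.
- apply/eqP/setP => i; rewrite inE; apply/bigcupP.
  by have [T sT iT] := segment_cover s i; exists T; rewrite ?inE.
- apply/trivIsetP => T1 T2; rewrite !inE => sT1 sT2.
  by apply: contraR; rewrite -setI_eq0 => /(segment_eq sT1 sT2) ->.
- by rewrite inE; apply/negP => /segment_section/section_neq0; rewrite eqxx.
Qed.

Lemma section_cover_Seg s I : section s I -> I = cover [set T in Seg s | T \subset I].
Proof.
move=> secI; apply/setP => i; apply/idP/bigcupP => [iI|[T]]; last first.
  by rewrite !inE => /andP[_ /subsetP TI] /TI.
have [T sT iT] := segment_cover s i; exists T => //.
rewrite !inE sT (segment_sub_section sT secI) //; apply/set0Pn; exists i; exact/setIP.
Qed.

Lemma section_of_cover_Seg s I (P : {set {set 'I_n}}) :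
  is_interval I -> P \subset Seg s -> I = cover P -> section s I.
Proof.
move=> /is_intervalP[a [b [ab defI]]] /subsetP PSeg defIP.
have cut_around i : i \in I -> exists c d, [/\ cut s c, cut s d, c <= i < d, a <= c & d <= b].
  rewrite {1}defIP => /bigcupP[T TP iT].
  have /segmentP[c [d [cd sc sd defT _]]] : segment s T by have := PSeg T TP; rewrite inE.
  have /(itv_subset cd)[ac db] : itv c d \subset itv a b.
    by rewrite -defT -defI defIP; exact: bigcup_sup.
  by exists c, d; split=> //; move: iT; rewrite defT inE.
have [an bn] : a < n /\ b.-1 < n by lia.
have aI : Ordinal an \in I by rewrite defI inE /=; lia.
have bI : Ordinal bn \in I by rewrite defI inE /=; lia.
have [c [d' [sc _ ca ac _]]] := cut_around _ aI.
have [c' [d [_ sd bd _ db]]] := cut_around _ bI.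
apply/sectionP; exists a, b; split=> //.
- by have -> : a = c by move: ca => /=; lia.
- by have -> : b = d by move: bd => /=; lia.
Qed.

Lemma section_iff_cover_Seg s I : section s I <->
  is_interval I /\ exists P : {set {set 'I_n}}, P \subset Seg s /\ I = cover P.
Proof.
split=> [secI|[itvI [P [PSeg defI]]]]; last exact: section_of_cover_Seg itvI PSeg defI.
split; first by case/sectionP: secI => a [b [ab _ _ ->]]; apply/is_intervalP; exists a, b.
exists [set T in Seg s | T \subset I]; split; last exact: section_cover_Seg.
by apply/subsetP => T; rewrite inE => /andP[].
Qed.

Lemma restrP s m I :
  reflect ({in I, m =1 s} \/ {in I, m =1 (s^-1)%g}) (restr_rel s m I).
Proof.
apply: (iffP orP) => [[] /forall_inP mI|[] mI]; [left|right|left|right].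
- by move=> i /mI /eqP.
- by move=> i /mI /eqP.
- by apply/forall_inP => i /mI ->.
- by apply/forall_inP => i /mI ->.
Qed.

Lemma restr_subset s m I J : J \subset I -> restr_rel s m I -> restr_rel s m J.
Proof. by move=> /subsetP JI /restrP[] mI; apply/restrP; [left|right] => i /JI /mI. Qed.

Lemma restr_closed s m I J : J \subset I -> restr_rel s m I -> closed m J = closed s J.
Proof.
move=> /subsetP JI /restrP[] mI; first by apply: eq_closed => i /JI /mI.
by rewrite -(closedV s); apply: eq_closed => i /JI /mI.
Qed.

Lemma eq_on_inv s m I : closed s I -> {in I, m =1 s} -> {in I, (m^-1)%g =1 (s^-1)%g}.
Proof.
move=> /closedP sI mI i iI; have s'iI : (s^-1)%g i \in I by rewrite -sI permKV.
by rewrite -{1}[i](permKV s) -mI // permK.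
Qed.

Lemma restr_sym s m I : closed s I -> restr_rel s m I -> restr_rel m s I.
Proof.
move=> sI /restrP[] mI; apply/restrP; first by left => i /mI.
by right => i iI; rewrite -[s]invgK -(eq_on_inv _ mI) // closedV.
Qed.

Lemma restr_trans s m p I : closed s I ->
  restr_rel s m I -> restr_rel m p I -> restr_rel s p I.
Proof.
move=> sI smI /restrP[] pI; case/restrP: smI => mI; apply/restrP.
- by left => i iI; rewrite pI ?mI.
- by right => i iI; rewrite pI ?mI.
- by right => i iI; rewrite pI // (eq_on_inv sI mI).
- by left => i iI; rewrite pI // -[s]invgK -(eq_on_inv _ mI) // closedV.
Qed.

Lemma cut_eq_of_restr s m (P : {set {set 'I_n}}) :
  cover P = setT -> {in P, forall J, closed s J} -> {in P, forall J, restr_rel s m J} ->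
  cut s =1 cut m.
Proof.
move=> covP sP smP k.
have mP : {in P, forall J, closed m J}.
  by move=> J JP; rewrite (restr_closed (subxx J) (smP J JP)) sP.
rewrite /cut (closed_cover _ covP sP) (closed_cover _ covP mP).
by apply: eq_forallb_in => J JP; rewrite (restr_closed (subsetIl J _) (smP J JP)).
Qed.

Lemma eq_section s m : cut s =1 cut m -> section s =1 section m.
Proof.
move=> sm I; apply/sectionP/sectionP => -[a [b [ab ca cb defI]]]; exists a, b.
  by rewrite -!sm.
by rewrite !sm.
Qed.

Lemma eq_Seg s m : cut s =1 cut m -> Seg s = Seg m.
Proof.
move=> sm; apply/setP => I; rewrite !inE /segment (eq_section sm).
by congr andb; apply: eq_forallb => J; rewrite (eq_section sm).
Qed.

Lemma rho_ie_sections s m : rho_ie s m <->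
  exists P : {set {set 'I_n}},
    [/\ {in P, forall J, section s J}, trivIset P, cover P = [set: 'I_n]
      & {in P, forall J, restr_rel s m J}].
Proof.
split=> [/andP[_ /forall_inP smSeg]|[P [secP _ covP smP]]].
  have /and3P[/eqP covSeg trivSeg _] := partition_Seg s.
  by exists (Seg s); split=> // J; rewrite inE => /segment_section.
have sP : {in P, forall J, closed s J} by move=> J /secP /section_closed.
have cut_sm := cut_eq_of_restr covP sP smP.
apply/andP; split; first by rewrite (eq_Seg cut_sm).
apply/forall_inP => T; rewrite inE => segT.
have /set0Pn[i iT] := section_neq0 (segment_section segT).
have /bigcupP[J JP iJ] : i \in cover P by rewrite covP inE.
apply: restr_subset (smP J JP); apply: segment_sub_section segT (secP J JP) _.
by apply/set0Pn; exists i; apply/setIP.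
Qed.

Lemma Seg_closed s I : I \in Seg s -> closed s I.
Proof. by rewrite inE => /segment_section/section_closed. Qed.

Lemma rho_ie_refl : reflexive (@rho_ie n).
Proof. by move=> s; rewrite /rho_ie eqxx; apply/forall_inP => I _; apply/restrP; left. Qed.

Lemma rho_ie_sym : symmetric (@rho_ie n).
Proof.
suff rho_ie_symW s m : rho_ie s m -> rho_ie m s by move=> s m; apply/idP/idP => /rho_ie_symW.
case/andP => /eqP eqSeg /forall_inP smSeg; rewrite /rho_ie eqSeg eqxx.
apply/forall_inP => I; rewrite -eqSeg => ISeg.
exact: restr_sym (Seg_closed ISeg) (smSeg I ISeg).
Qed.

Lemma rho_ie_trans : transitive (@rho_ie n).
Proof.
move=> m s p /andP[/eqP eqSeg1 /forall_inP smSeg] /andP[/eqP eqSeg2 /forall_inP mpSeg].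
apply/andP; split; first by rewrite eqSeg1 eqSeg2.
apply/forall_inP => I ISeg; have ISeg_m : I \in Seg m by rewrite -eqSeg1.
exact: restr_trans (Seg_closed ISeg) (smSeg I ISeg) (mpSeg I ISeg_m).
Qed.

End Cuts.

Theorem lemma3p1 (n : nat) (s m : 'S_n) :
  (* (i) *)
  partition (Seg s) [set: 'I_n] /\
  (* (ii) *)
  (forall I J : {set 'I_n}, section s I -> section s J ->
     section s (I :&: J) \/ I :&: J = set0) /\
  (* (iii) *)
  (forall I : {set 'I_n}, section s I <->
     (is_interval I /\ exists P : {set {set 'I_n}}, P \subset Seg s /\ I = cover P)) /\
  (* (iv) *)
  (rho_ie s m <->
     exists P : {set {set 'I_n}},
       [/\ {in P, forall J, section s J}, trivIset P, cover P = [set: 'I_n]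
         & {in P, forall J, restr_rel s m J}]) /\
  (* (v) *)
  (reflexive (@rho_ie n) /\ symmetric (@rho_ie n) /\ transitive (@rho_ie n)).
Proof.
split; first exact: partition_Seg.
split; first exact: section_meet.
split; first exact: section_iff_cover_Seg.
split; first exact: rho_ie_sections.
by split; [exact: rho_ie_refl | split; [exact: rho_ie_sym | exact: rho_ie_trans]].
Qed.
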